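(* Let $G$ be a tree on vertex set $[n]$ and let $\mathrm{CIM}_G=\operatorname{conv}\left(c_\mathcal{G}\colon \mathcal{G}\text{ a DAG on }[n]\text{ with skeleton } G\right)$. Then $\operatorname{diam}(\mathrm{CIM}_G)$ is less than or equal to the number of internal vertices (non-leaf vertices) of $G$.
   Context: For a directed acyclic graph (DAG) $\mathcal{G}$ on vertex set $[n]=\{1,\dots,n\}$, the characteristic imset $c_\mathcal{G}$ is the 0/1-vector indexed by the subsets $S\subseteq[n]$ with $|S|\geq 2$, with $c_\mathcal{G}(S)=1$ if there exists $i\in S$ such that $S\subseteq \mathrm{pa}_\mathcal{G}(i)\cup\{i\}$ (where $\mathrm{pa}_\mathcal{G}(i)$ is the set of parents of $i$), and $c_\mathcal{G}(S)=0$ otherwise. The skeleton of a DAG is the undirected graph with the same vertices and adjacencies. For a polytope $P$, the vertex-edge graph $G(P)$ has the vertices of $P$ as nodes, with two vertices adjacent iff their convex hull is an edge of $P$; $\operatorname{diam}(P)$ is the maximum over pairs of vertices of the length of a shortest path between them in $G(P)$. *)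

From HB Require Import structures.
From mathcomp Require Import all_boot all_order all_algebra.
From mathcomp Require Import reals.
Set Implicit Arguments. Unset Strict Implicit. Unset Printing Implicit Defensive.
Import Order.TTheory GRing.Theory Num.Theory.
Local Open Scope ring_scope.

Definition simple_graph (n : nat) (G : rel 'I_n) : Prop :=
  (forall i j, G i j = G j i) /\ (forall i, ~~ G i i).

(* a tree: connected simple graph with n - 1 edges
   (edges counted as ordered pairs, hence 2 (n-1)); n >= 1 *)
Definition is_tree (n : nat) (G : rel 'I_n) : Prop :=
  (0 < n)%N /\ simple_graph G /\ (forall i j, connect G i j) /\
  #|[set p : 'I_n * 'I_n | G p.1 p.2]| = (2 * (n - 1))%N.

Definition degree (n : nat) (G : rel 'I_n) (v : 'I_n) : nat :=
  #|[set w | G v w]|.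

Definition internal_vertices (n : nat) (G : rel 'I_n) : nat :=
  #|[set v | (1 < degree G v)%N]|.

(* D i j means the arrow i -> j *)
Definition is_dag (n : nat) (D : rel 'I_n) : Prop :=
  forall i j, D i j -> ~~ connect D j i.

Definition has_skeleton (n : nat) (D G : rel 'I_n) : Prop :=
  forall i j, G i j = D i j || D j i.

Definition parents (n : nat) (D : rel 'I_n) (i : 'I_n) : {set 'I_n} :=
  [set j | D j i].

Definition cim_index (n : nat) := {S : {set 'I_n} | (1 < #|S|)%N}.

Definition cim_value (n : nat) (D : rel 'I_n) (S : {set 'I_n}) : bool :=
  [exists i in S, S \subset i |: parents D i].

Definition char_imset (R : realType) (n : nat) (D : rel 'I_n)
  : {ffun cim_index n -> R} :=
  [ffun S => (cim_value D (val S))%:R].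

Definition CIM_points (R : realType) (n : nat) (G : rel 'I_n)
  (p : {ffun cim_index n -> R}) : Prop :=
  exists D : rel 'I_n, [/\ is_dag D, has_skeleton D G & p = char_imset R D].

Section Polytope.
Variables (R : realType) (I : finType).
Implicit Types (V : {ffun I -> R} -> Prop) (c u v w : {ffun I -> R}).

Definition dotp c w : R := \sum_(i : I) c i * w i.

(* v is a vertex of conv(V): v in V and some linear functional is uniquely
   maximized at v over V (equivalently over conv(V)) *)
Definition poly_vertex V v : Prop :=
  V v /\ exists c, forall w, V w -> w <> v -> dotp c w < dotp c v.

(* conv{u,v} is an edge of conv(V): u <> v are vertices and for some linear
   functional the face of conv(V) maximizing it is exactly the segment [u,v]
   (the maximizers in V all lie in the segment, u and v being maximizers) *)
Definition poly_edge V u v : Prop :=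
  [/\ poly_vertex V u, poly_vertex V v, u <> v &
   exists c, dotp c u = dotp c v /\
     forall w, V w -> dotp c w <= dotp c u /\
       (dotp c w = dotp c u ->
        exists t : R, [/\ 0 <= t, t <= 1 & forall i, w i = t * u i + (1 - t) * v i])].

Fixpoint within_dist V (k : nat) u v : Prop :=
  match k with
  | 0 => u = v
  | k'.+1 => u = v \/ exists w, poly_edge V u w /\ within_dist V k' w v
  end.

Definition diam_le V (k : nat) : Prop :=
  forall u v, poly_vertex V u -> poly_vertex V v -> within_dist V k u v.

End Polytope.

(* On a triangle-free skeleton the characteristic imset of a DAG D is determined
   by its collider sets cp(D, x): the parents of x when x has at least two of them,
   the empty set otherwise.  For T a set of at least two neighbours of x, the
   coordinate of c_D at {x} ∪ T is the indicator of T ⊆ cp(D, x), so by Möbius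
   inversion every function D ↦ Σ_x β_x(cp(D, x)) is a linear functional of c_D.
   Taking β_x to be the indicator of a set of allowed collider sets shows that the
   DAGs whose collider sets are allowed at every vertex span a face of CIM_G.
   Given DAGs A and B, let C agree with B on a minimal nonempty set of vertices
   where A and B differ, and with A elsewhere: the face allowing only cp(A, x)
   and cp(C, x) at each x then contains only c_A and c_C, so it is an edge.
   Induction on the number of vertices where A and B differ bounds the distance
   by the number of vertices where a collider set can be nonempty, i.e. the
   vertices of degree at least 2.  Trees are triangle-free: deleting an edge of a
   triangle would leave a connected graph with fewer than n - 1 edges. *)

From mathcomp Require Import all_boot all_order all_algebra.
From mathcomp Require Import reals zify lra.
From Stdlib Require Import Classical.
Set Implicit Arguments. Unset Strict Implicit. Unset Printing Implicit Defensive.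
Import Order.TTheory GRing.Theory Num.Theory.

Lemma card_gt1_other (T : finType) (A : {set T}) i : 1 < #|A| -> exists2 j, j \in A & j != i.
Proof.
move=> A_gt1; have /card_gt0P[j] : 0 < #|A :\ i|.
  by move: A_gt1; rewrite (cardsD1 i A); case: (i \in A) => /= [|/ltnW].
by rewrite !inE => /andP[ji jA]; exists j.
Qed.

Lemma ex_card_minimal (T : finType) (P : {set T} -> Prop) Y :
  P Y -> exists2 Y0, P Y0 & forall Y', P Y' -> #|Y0| <= #|Y'|.
Proof.
move: {2}#|Y| (leqnn #|Y|) => m; elim: m Y => [|m IH] Y Y_le PY.
  by exists Y => // Y' _; move: Y_le; rewrite leqn0 => /eqP ->.
have [[Y' [PY' lt_Y']] | no_smaller] := classic (exists Y', P Y' /\ #|Y'| < #|Y|).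
  by apply: (IH Y') => //; rewrite -ltnS; apply: leq_trans lt_Y' Y_le.
by exists Y => // Y' PY'; rewrite leqNgt; apply/negP => lt_Y'; apply: no_smaller; exists Y'.
Qed.

Section ConnectedGraphEdges.
Variables (T : finType) (e : rel T) (r : T).
Hypothesis e_sym : symmetric e.
Hypothesis e_conn : forall v, connect e v r.

Definition reaches_root_in v k := [exists p : k.-tuple T, path e v p && (last v p == r)].

Lemma reaches_root v : exists k, reaches_root_in v k.
Proof.
case/connectP: (e_conn v) => p e_p last_p.
by exists (size p); apply/existsP; exists (in_tuple p); rewrite e_p -last_p eqxx.
Qed.

Definition root_dist v := ex_minn (reaches_root v).

Lemma root_dist_step v : v != r -> exists2 w, e v w & root_dist w < root_dist v.
Proof.
rewrite /root_dist; case: ex_minnP => k /existsP[[p /= /eqP size_p]] /andP[e_p /eqP last_p] _.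
case: p size_p e_p last_p => [|w p] /= size_p; first by move=> _ <-; rewrite eqxx.
move=> /andP[e_vw e_p] last_p _; exists w => //.
case: ex_minnP => m _ /(_ (size p)); rewrite -size_p; apply.
by apply/existsP; exists (in_tuple p); rewrite /= e_p last_p eqxx.
Qed.

Definition step_to_root v := odflt v [pick w | e v w && (root_dist w < root_dist v)].

Lemma step_to_rootP v :
  v != r -> e v (step_to_root v) && (root_dist (step_to_root v) < root_dist v).
Proof.
move=> vr; rewrite /step_to_root; case: pickP => [w //|no_step].
by case: (root_dist_step vr) => w e_vw lt_w; move: (no_step w); rewrite e_vw lt_w.
Qed.

Lemma card_edges_connected : 2 * (#|T| - 1) <= #|[set p : T * T | e p.1 p.2]|.
Proof.
pose s := step_to_root.
have card_nonroot : #|[set~ r]| = (#|T| - 1)%N by rewrite cardsC1 subn1.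
have inj_out : injective (fun v => (v, s v)) by move=> u v [].
have inj_in : injective (fun v => (s v, v)) by move=> u v [].
have disj : [disjoint [set (v, s v) | v in [set~ r]] & [set (s v, v) | v in [set~ r]]].
  apply/pred0P => p /=; apply/negbTE/negP => /andP[/imsetP[u ur ->] /imsetP[v vr [eu ev]]].
  rewrite !inE in ur vr.
  have /andP[_ lt_u] := step_to_rootP ur; have /andP[_ lt_v] := step_to_rootP vr.
  rewrite -/(s u) -/(s v) -eu ev in lt_u lt_v.
  by move: (ltn_trans lt_u lt_v); rewrite ltnn.
have sub : [set (v, s v) | v in [set~ r]] :|: [set (s v, v) | v in [set~ r]]
    \subset [set p : T * T | e p.1 p.2].
  apply/subsetP => p /setUP[] /imsetP[v vr ->]; rewrite !inE in vr *;
    have /andP[e_vs _] := step_to_rootP vr; [exact: e_vs | by rewrite /= e_sym].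
move: (subset_leq_card sub); rewrite cardsU (disjoint_setI0 disj) cards0 subn0.
by rewrite !card_imset // card_nonroot addnn -mul2n.
Qed.

End ConnectedGraphEdges.

Definition triangle_free (T : Type) (G : rel T) :=
  forall a b c, G a b -> G b c -> G a c -> False.

Lemma tree_triangle_free n (G : rel 'I_n) : is_tree G -> triangle_free G.
Proof.
case=> _ [[G_sym G_irr] [G_conn G_card]] a b c Gab Gbc Gac.
have neq x y : G x y -> (x == y) = false by apply: contraTF => /eqP ->; apply: G_irr.
pose ab := [set (a, b); (b, a)].
pose G' : rel 'I_n := fun i j => G i j && ((i, j) \notin ab).
have G'_sym : symmetric G'.
  by move=> i j; rewrite /G' G_sym !inE !xpair_eqE orbC (andbC (i == b)) (andbC (i == a)).
have G'_ac : G' a c.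
  by rewrite /G' Gac !inE !xpair_eqE (eq_sym c) (neq _ _ Gbc) (neq _ _ Gab) andbF.
have G'_cb : G' c b.
  by rewrite /G' G_sym Gbc !inE !xpair_eqE !(eq_sym c) (neq _ _ Gac) (neq _ _ Gbc).
have G'_conn v : connect G' v a.
  suff G_G' : subrel G (connect G') by apply: connect_sub G_G' _ _ (G_conn v a).
  move=> i j Gij; have [|ij_ab] := boolP ((i, j) \in ab); last by apply: connect1; rewrite /G' Gij.
  have acb := connect_trans (connect1 G'_ac) (connect1 G'_cb).
  by rewrite !inE => /orP[] /eqP[-> ->] //; rewrite (sym_connect_sym G'_sym).
have ab_sub : ab \subset [set p : 'I_n * 'I_n | G p.1 p.2].
  by apply/subsetP => p; rewrite !inE => /orP[] /eqP-> /=; rewrite // G_sym.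
have card_ab : #|ab| = 2 by rewrite cards2 xpair_eqE (neq _ _ Gab).
have := card_edges_connected G'_sym G'_conn.
have -> : [set p | G' p.1 p.2] = [set p : 'I_n * 'I_n | G p.1 p.2] :\: ab.
  by apply/setP => -[i j]; rewrite /G' !inE andbC.
rewrite cardsD (setIidPr ab_sub) G_card card_ab card_ord.
by move: (subset_leq_card ab_sub); rewrite card_ab G_card; lia.
Qed.

Definition nbhd n (G : rel 'I_n) x := [set y | G x y].

Definition collider_parents n (D : rel 'I_n) x : {set 'I_n} :=
  if 1 < #|parents D x| then parents D x else set0.

Lemma collider_parentsP n (D : rel 'I_n) x : collider_parents D x = set0 \/
  1 < #|collider_parents D x| /\ collider_parents D x = parents D x.
Proof. by rewrite /collider_parents; case: ifP => [|_]; [right | left]. Qed.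

Definition collider_diff n (A B : rel 'I_n) :=
  [set x | collider_parents A x != collider_parents B x].

Lemma collider_diff_eq0 n (A B : rel 'I_n) :
  collider_diff A B = set0 -> collider_parents A =1 collider_parents B.
Proof. by move=> AB0 x; apply/eqP; move: (in_set0 x); rewrite -AB0 inE => /negbFE. Qed.

Section Skeleton.
Variables (n : nat) (G : rel 'I_n).

Lemma cim_value_colliders_mono D1 D2 (S : {set 'I_n}) : has_skeleton D1 G -> has_skeleton D2 G ->
  collider_parents D1 =1 collider_parents D2 -> 1 < #|S| -> cim_value D1 S -> cim_value D2 S.
Proof.
move=> sk1 sk2 cp12 S_gt1 /existsP[i /andP[iS S_sub]]; apply/existsP.
have [pa_gt1 | pa_le1] := ltnP 1 #|parents D1 i|.
  exists i; rewrite iS /=.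
  have cp1 : collider_parents D1 i = parents D1 i by rewrite /collider_parents pa_gt1.
  case: (collider_parentsP D2 i) => [cp2_0 | [_ <-]]; last by rewrite -cp12 cp1.
  by move: pa_gt1; rewrite -cp1 cp12 cp2_0 cards0.
(* otherwise S is an edge {i, j} of G, and every DAG with skeleton G has it *)
have [j jS ji] := card_gt1_other i S_gt1.
have j_pa : j \in parents D1 i.
  by move/subsetP: S_sub => /(_ j jS); rewrite !inE (negbTE ji).
have S_ij : S \subset [set i; j].
  apply/subsetP => k kS; move/subsetP: S_sub => /(_ k kS); rewrite !inE.
  by case/orP => [-> // | k_pa]; rewrite (card_le1_eqP pa_le1 k j) ?eqxx ?orbT // inE.
have : G j i by move: j_pa; rewrite inE sk1 => ->.
rewrite sk2 => /orP[D_ji | D_ij].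
  by exists i; rewrite iS (subset_trans S_ij) // setUS // sub1set inE.
by exists j; rewrite jS (subset_trans S_ij) // setUC setUS // sub1set inE.
Qed.

Lemma char_imset_colliders (R : realType) D1 D2 : has_skeleton D1 G -> has_skeleton D2 G ->
  collider_parents D1 =1 collider_parents D2 -> char_imset R D1 = char_imset R D2.
Proof.
move=> sk1 sk2 cp12; apply/ffunP => S; rewrite !ffunE; congr ((nat_of_bool _)%:R)%R.
by apply/idP/idP; apply: cim_value_colliders_mono; rewrite ?(valP S) // => x; rewrite cp12.
Qed.

Hypothesis G_sym : symmetric G.

Lemma parents_sub_nbhd D x : has_skeleton D G -> parents D x \subset nbhd G x.
Proof. by move=> sk; apply/subsetP => y; rewrite !inE G_sym sk => ->. Qed.

Lemma collider_parents_sub_nbhd D x :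
  has_skeleton D G -> collider_parents D x \subset nbhd G x.
Proof.
by move=> sk; case: (collider_parentsP D x) => [-> | [_ ->]]; rewrite ?sub0set ?parents_sub_nbhd.
Qed.

Lemma collider_degree D x :
  has_skeleton D G -> collider_parents D x != set0 -> 1 < degree G x.
Proof.
move=> sk; case: (collider_parentsP D x) => [-> | [cp_gt1 _] _]; first by rewrite eqxx.
exact: leq_trans cp_gt1 (subset_leq_card (collider_parents_sub_nbhd x sk)).
Qed.

Hypotheses (G_irr : forall i, ~~ G i i) (G_tri : triangle_free G).

Lemma cim_value_local D x (T : {set 'I_n}) : has_skeleton D G -> T \subset nbhd G x -> 1 < #|T| ->
  cim_value D (x |: T) = (T \subset collider_parents D x).
Proof.
move=> sk T_nbhd T_gt1.
have xT : x \notin T by apply: contraNN (G_irr x) => /(subsetP T_nbhd); rewrite inE.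
apply/existsP/idP => [[i /andP[]] | T_cp]; last first.
  exists x; rewrite setU11 setUS //=.
  case: (collider_parentsP D x) T_cp => [-> | [_ <-] //].
  by rewrite subset0 => /eqP T0; rewrite T0 cards0 in T_gt1.
rewrite in_setU1 => /orP[/eqP -> | iT] sub.
  have T_pa : T \subset parents D x.
    apply/subsetP => t tT; move/subsetP: sub => /(_ t); rewrite !inE tT orbT => /(_ isT).
    by case/orP => // /eqP tx; rewrite -tx tT in xT.
  by rewrite /collider_parents (leq_trans T_gt1 (subset_leq_card T_pa)).
have [j jT ji] := card_gt1_other i T_gt1.
have : j \in parents D i.
  by move/subsetP: sub => /(_ j); rewrite !inE jT orbT (negbTE ji) => /(_ isT).
rewrite inE => D_ji; have G_ij : G i j by rewrite sk D_ji orbT.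
have /(subsetP T_nbhd) := iT; have /(subsetP T_nbhd) := jT; rewrite !inE => G_xj G_xi.
by case: (G_tri G_xi G_ij G_xj).
Qed.

End Skeleton.

Local Open Scope ring_scope.

Section MoebiusInversion.
Variables (R : pzRingType) (T : finType).
Lemma sum_sign_interval (S L : {set T}) :
  \sum_(X : {set T} | (S \subset X) && (X \subset L)) (-1) ^+ #|X :\: S| = (S == L)%:R :> R.
Proof.
have [SL | nSL] := boolP (S \subset L); last first.
  rewrite big1 => [|X /andP[SX XL]]; last by rewrite (subset_trans SX XL) in nSL.
  by case: eqP => // eSL; rewrite eSL subxx in nSL.
have [<- | neSL] := eqVneq S L.
  by rewrite (big_pred1 S) ?setDv ?cards0 // => X; rewrite /= eqEsubset andbC.
have [z zL zS] : exists2 z, z \in L & z \notin S.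
  by apply/subsetPn; rewrite eqEsubset SL in neSL.
(* pair each X avoiding z with z |: X: their signs cancel *)
rewrite (bigID (fun X : {set T} => z \in X)) /=.
rewrite (reindex_onto (fun X => z |: X) (fun X => X :\ z)) /=; last first.
  by move=> X /andP[_ zX]; rewrite setD1K.
have S_zX (X : {set T}) : (S \subset z |: X) = (S \subset X).
  by rewrite -subDset (setDidPl _) // disjoint_sym disjoints1.
rewrite (eq_bigl (fun X : {set T} => (S \subset X) && (X \subset L) && (z \notin X))) => [|X].
  rewrite -big_split big1 //= => X /andP[_ zX].
  have -> : (z |: X) :\: S = z |: (X :\: S).
    by apply/setP => y; rewrite !inE; case: eqP => // ->; rewrite zS.
  have zXS : z \notin X :\: S by rewrite inE negb_and zX orbT.
  by rewrite cardsU1 zXS exprS mulN1r addNr.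
have [zX | zX] := boolP (z \in X).
  rewrite (_ : (z |: X) :\ z == X = false) ?andbF //.
  by apply: contraTF zX => /eqP <-; rewrite setD11.
by rewrite setU1K // eqxx setU11 S_zX subUset sub1set zL !andbT.
Qed.

Lemma moebius_inversion (f : {set T} -> R) (L : {set T}) :
  \sum_(X : {set T} | X \subset L) \sum_(S : {set T} | S \subset X) f S * (-1) ^+ #|X :\: S|
  = f L.
Proof.
rewrite (exchange_big_dep (fun S : {set T} => S \subset L)) /=; last first.
  by move=> X S XL SX; apply: subset_trans SX XL.
under eq_bigr => S SL.
  rewrite -mulr_sumr (eq_bigl (fun X : {set T} => (S \subset X) && (X \subset L))) => [|X].
    rewrite sum_sign_interval; over.
  by rewrite andbC.
by rewrite (bigD1 L) //= eqxx mulr1 big1 ?addr0 // => S /andP[_ /negbTE ->]; rewrite mulr0.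
Qed.

End MoebiusInversion.

Lemma sum_ler_eq (R : numDomainType) (I : finType) (F G : I -> R) :
  (forall i, F i <= G i) -> \sum_i F i = \sum_i G i -> F =1 G.
Proof.
move=> le_FG eq_FG i; apply/esym/eqP; rewrite -subr_eq0; apply/eqP.
apply: (psumr_eq0P (P := predT) (F := fun i => G i - F i)) => // [j _|].
  by rewrite subr_ge0.
by rewrite sumrB eq_FG subrr.
Qed.

Section PolytopeFacts.
Variables (R : realType) (I : finType).
Implicit Types (V : {ffun I -> R} -> Prop) (c u v w : {ffun I -> R}).

Lemma poly_vertex_01 V v :
  (forall w, V w -> forall i, w i = 0 \/ w i = 1) -> V v -> poly_vertex V v.
Proof.
move=> V01 Vv; split=> //; pose c := [ffun i => 2 * v i - 1]; exists c => w Vw wv.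
have coord i : c i * w i <= c i * v i /\ (c i * w i = c i * v i -> w i = v i).
  by rewrite ffunE; case: (V01 v Vv i) (V01 w Vw i) => -> [] ->; split => //; lra.
rewrite lt_neqAle ler_sum ?andbT => [|i _]; last by case: (coord i).
apply: contra_notN wv => /eqP eq_dot; apply/ffunP => i; apply: (proj2 (coord i)).
apply: (sum_ler_eq (F := fun j => c j * w j) (G := fun j => c j * v j)) eq_dot i.
by move=> j; case: (coord j).
Qed.

Lemma poly_edge_face V u v c : poly_vertex V u -> poly_vertex V v -> u <> v ->
  dotp c u = dotp c v ->
  (forall w, V w -> dotp c w <= dotp c u /\ (dotp c w = dotp c u -> w = u \/ w = v)) ->
  poly_edge V u v.
Proof.
move=> Vu Vv uv cuv face; split => //; exists c; split => // w /face[le_wu eq_wu].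
split => // /eq_wu[-> | ->].
  by exists 1; rewrite ler01 lexx; split => // i; rewrite mul1r subrr mul0r addr0.
by exists 0; rewrite ler01 lexx; split => // i; rewrite mul0r subr0 mul1r add0r.
Qed.

Lemma within_dist_refl V k u : within_dist V k u u.
Proof. by case: k => /=; [|left]. Qed.

Lemma within_distS V k u v : within_dist V k u v -> within_dist V k.+1 u v.
Proof.
elim: k u => [|k IH] u /=; first by left.
by case=> [-> | [w [uw wv]]]; [left | right; exists w; split => //; apply: IH].
Qed.

End PolytopeFacts.

Definition collider_mixture n (A B : rel 'I_n) (Y : {set 'I_n}) (C : rel 'I_n) :=
  forall x, collider_parents C x = if x \in Y then collider_parents B x else collider_parents A x.

Section CIMFaces.
Variables (R : realType) (n : nat) (G : rel 'I_n).
Hypotheses (G_sym : symmetric G) (G_irr : forall i, ~~ G i i) (G_tri : triangle_free G).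

Lemma collider_sum_linear (beta : 'I_n -> {set 'I_n} -> R) :
  exists c : {ffun cim_index n -> R}, forall D, has_skeleton D G ->
    dotp c (char_imset R D) = \sum_x (beta x (collider_parents D x) - beta x set0).
Proof.
(* f x vanishes on sets of size at most 1, hence so does mu x: the sets T too
   small for {x} ∪ T to be an imset coordinate do not contribute *)
pose f x (S : {set 'I_n}) := if (1 < #|S|)%N then beta x S - beta x set0 else 0.
pose mu x (T : {set 'I_n}) := \sum_(S : {set 'I_n} | S \subset T) f x S * (-1) ^+ #|T :\: S|.
exists [ffun Z : cim_index n =>
  \sum_x \sum_(T : {set 'I_n} | T \subset nbhd G x) if x |: T == val Z then mu x T else 0].
move=> D sk.
have mu_small x (T : {set 'I_n}) : (#|T| <= 1)%N -> mu x T = 0.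
  move=> T_le1; rewrite /mu big1 // => S ST; rewrite /f ifN ?mul0r // -leqNgt.
  exact: leq_trans (subset_leq_card ST) T_le1.
have coord x (T : {set 'I_n}) : T \subset nbhd G x ->
    \sum_Z (if x |: T == val Z then mu x T else 0) * char_imset R D Z =
    if T \subset collider_parents D x then mu x T else 0.
  move=> T_nbhd; have [T_le1 | T_gt1] := leqP #|T| 1.
    by rewrite mu_small // if_same big1 // => Z _; rewrite if_same mul0r.
  have xT_gt1 : (1 < #|x |: T|)%N := leq_trans T_gt1 (subset_leq_card (subsetUr _ _)).
  rewrite (bigD1 (Sub (x |: T) xT_gt1 : cim_index n)) //= eqxx big1 ?addr0 => [|Z Z_ne].
    by rewrite ffunE /= (cim_value_local G_irr G_tri) // mulr_natr mulrb.
  rewrite ifN ?mul0r //; apply: contra Z_ne => /eqP xT_Z.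
  by apply/eqP/val_inj; rewrite /= xT_Z.
rewrite /dotp; under eq_bigr do rewrite ffunE mulr_suml.
rewrite exchange_big; apply: eq_bigr => x _.
under eq_bigr do rewrite mulr_suml.
rewrite exchange_big /=.
under eq_bigr => T T_nbhd do rewrite coord //.
rewrite -big_mkcondr /= (eq_bigl (fun T : {set 'I_n} => T \subset collider_parents D x)) => [|T].
  rewrite moebius_inversion /f.
  by case: (collider_parentsP D x) => [-> | [-> _]]; rewrite ?cards0 ?subrr.
by apply: andb_idl => /subset_trans; apply; apply: collider_parents_sub_nbhd.
Qed.

Notation CIM := (@CIM_points R n G).

Lemma collider_face (F : 'I_n -> {set {set 'I_n}}) :
  exists c : {ffun cim_index n -> R}, exists m : R, forall D, has_skeleton D G ->
    dotp c (char_imset R D) <= m /\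
    (dotp c (char_imset R D) = m <-> forall x, collider_parents D x \in F x).
Proof.
have [c dotp_c] := collider_sum_linear (fun x L => (L \in F x)%:R).
exists c, (\sum_x (1 - (set0 \in F x)%:R)) => D sk; rewrite dotp_c //.
have le_1 x : (collider_parents D x \in F x)%:R - (set0 \in F x)%:R <= 1 - (set0 \in F x)%:R :> R.
  by rewrite lerD2r; case: (_ \in _); rewrite ?lexx ?ler01.
split; first exact: ler_sum.
split => [eq_m x | all_in]; last by apply: eq_bigr => x _; rewrite all_in.
move: (sum_ler_eq le_1 eq_m x) => /addIr.
by case: (_ \in _) => // /eqP; rewrite eq_sym oner_eq0.
Qed.

Lemma cim_vertex p : CIM p -> poly_vertex CIM p.
Proof.
by apply: poly_vertex_01 => _ [D [_ _ ->]] S; rewrite ffunE; case: cim_value; [right | left].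
Qed.

Lemma cim_edge_colliders A C : is_dag A -> has_skeleton A G -> is_dag C -> has_skeleton C G ->
  char_imset R A <> char_imset R C ->
  (forall W, is_dag W -> has_skeleton W G ->
     (forall x, collider_parents W x \in [set collider_parents A x; collider_parents C x]) ->
     collider_parents W =1 collider_parents A \/ collider_parents W =1 collider_parents C) ->
  poly_edge CIM (char_imset R A) (char_imset R C).
Proof.
move=> dagA skA dagC skC AC mixed.
have [c [m face]] := collider_face (fun x => [set collider_parents A x; collider_parents C x]).
have cA : dotp c (char_imset R A) = m by apply/(proj2 (face A skA)) => x; rewrite set21.
have cC : dotp c (char_imset R C) = m by apply/(proj2 (face C skC)) => x; rewrite set22.
have vA : poly_vertex CIM (char_imset R A) by apply: cim_vertex; exists A.
have vC : poly_vertex CIM (char_imset R C) by apply: cim_vertex; exists C.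
apply: (poly_edge_face vA vC AC (c := c)); first by rewrite cA cC.
move=> _ [W [dagW skW ->]]; have [le_m top_W] := face W skW; rewrite cA; split => // /top_W.
case/(mixed W dagW skW) => [WA | WC].
  by left; apply: char_imset_colliders WA.
by right; apply: char_imset_colliders WC.
Qed.

Lemma cim_edge_minimal_mixture A B Y C :
  is_dag A -> has_skeleton A G -> is_dag C -> has_skeleton C G ->
  collider_mixture A B Y C -> char_imset R A <> char_imset R C ->
  (forall (Y' : {set 'I_n}) W, is_dag W -> has_skeleton W G -> Y' \subset Y -> Y' != set0 ->
     collider_mixture A B Y' W -> (#|Y| <= #|Y'|)%N) ->
  poly_edge CIM (char_imset R A) (char_imset R C).
Proof.
move=> dagA skA dagC skC mixC AC Y_min; apply: cim_edge_colliders => // W dagW skW W_AC.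
have offY x : x \notin Y -> collider_parents W x = collider_parents A x.
  by move=> xY; move: (W_AC x); rewrite mixC (negbTE xY) setUid inE => /eqP.
pose Y' := [set x in Y | collider_parents W x != collider_parents A x].
have Y'Y : Y' \subset Y by apply/subsetP => x; rewrite inE => /andP[].
have [Y'0 | Y'_ne] := eqVneq Y' set0.
  left => x; have [xY | /offY //] := boolP (x \in Y).
  by apply/eqP; move: (in_set0 x); rewrite -Y'0 inE xY => /negbFE.
have mixW : collider_mixture A B Y' W.
  move=> x; rewrite inE; have [xY | /offY //] := boolP (x \in Y).
  have [-> // | ne] := eqVneq (collider_parents W x) (collider_parents A x).
  by move: (W_AC x); rewrite mixC xY !inE (negbTE ne) => /eqP.
have {Y'Y}Y'Y : Y' = Y by apply/eqP; rewrite eqEcard Y'Y (Y_min Y' W).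
right => x; have [xY | xY] := boolP (x \in Y); last by rewrite offY // mixC (negbTE xY).
have : x \in Y' by rewrite Y'Y.
by rewrite inE xY /= => ne; move: (W_AC x); rewrite !inE (negbTE ne) => /eqP.
Qed.

Lemma cim_step A B : is_dag A -> has_skeleton A G -> is_dag B -> has_skeleton B G ->
  collider_diff A B != set0 ->
  exists C, [/\ is_dag C, has_skeleton C G, (#|collider_diff C B| < #|collider_diff A B|)%N &
    char_imset R A = char_imset R C \/ poly_edge CIM (char_imset R A) (char_imset R C)].
Proof.
move=> dagA skA dagB skB AB_ne.
pose P (Y : {set 'I_n}) := [/\ Y \subset collider_diff A B, Y != set0 &
  exists C, [/\ is_dag C, has_skeleton C G & collider_mixture A B Y C]].
have P_AB : P (collider_diff A B).
  split => //; exists B; split => // x; case: ifP => // /negbT.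
  by rewrite inE negbK => /eqP.
have [Y [Y_AB Y_ne [C [dagC skC mixC]]] Y_min] := ex_card_minimal P_AB.
exists C; split => //.
  have CB_sub : collider_diff C B \subset collider_diff A B :\: Y.
    by apply/subsetP => x; rewrite !inE mixC; case: (x \in Y); rewrite ?eqxx.
  apply: leq_ltn_trans (subset_leq_card CB_sub) _.
  have Y_gt0 : (0 < #|Y|)%N by rewrite card_gt0.
  rewrite cardsD (setIidPr Y_AB) ltn_subrL Y_gt0.
  exact: leq_trans Y_gt0 (subset_leq_card Y_AB).
have [AC | AC] := eqVneq (char_imset R A) (char_imset R C); [by left | right].
apply: (cim_edge_minimal_mixture dagA skA dagC skC mixC); first exact/eqP.
move=> Y' W dagW skW Y'Y Y'_ne mixW; apply: Y_min; split => //; first exact: subset_trans Y'Y Y_AB.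
by exists W.
Qed.

Lemma cim_within_dist k A B : is_dag A -> has_skeleton A G -> is_dag B -> has_skeleton B G ->
  (#|collider_diff A B| <= k)%N ->
  within_dist CIM k (char_imset R A) (char_imset R B).
Proof.
move=> dagA skA dagB skB.
have same A' k' : has_skeleton A' G -> collider_diff A' B = set0 ->
    within_dist CIM k' (char_imset R A') (char_imset R B).
  by move=> skA' /collider_diff_eq0 /(char_imset_colliders R skA' skB) ->; apply: within_dist_refl.
elim: k A dagA skA => [|k IH] A dagA skA AB_le;
  have [AB0 | AB_ne] := eqVneq (collider_diff A B) set0; try exact: same.
  by move: AB_le; rewrite leqn0 cards_eq0 (negbTE AB_ne).
have [C [dagC skC lt_CA [-> | edge]]] := cim_step dagA skA dagB skB AB_ne.
  by apply/within_distS/IH; rewrite // -ltnS (leq_trans lt_CA AB_le).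
by right; exists (char_imset R C); split => //; apply: IH; rewrite // -ltnS (leq_trans lt_CA AB_le).
Qed.

Theorem cim_diam_le_internal_vertices : diam_le CIM (internal_vertices G).
Proof.
move=> _ _ [[A [dagA skA ->]] _] [[B [dagB skB ->]] _].
apply: cim_within_dist => //; apply: subset_leq_card; apply/subsetP => x; rewrite !inE => AB.
have [A0 | /(collider_degree G_sym skA) //] := eqVneq (collider_parents A x) set0.
by apply: (collider_degree G_sym skB); rewrite -A0 eq_sym.
Qed.

End CIMFaces.

Theorem mainTheorem2 (R : realType) (n : nat) (G : rel 'I_n) :
  is_tree G -> diam_le (@CIM_points R n G) (internal_vertices G).
Proof.
move=> tree; case: (tree) => _ [[G_sym G_irr] _].
exact: cim_diam_le_internal_vertices G_sym G_irr (tree_triangle_free tree).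
Qed.
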